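(* Let $n\geq 3$ and let $L^B$ be a blow-up of the Boolean lattice $L\cong\mathbf{2}^n$ such that $L^B\cong L\cong\mathbf{2}^n$ (i.e. every replacing chain has exactly one element). Then $G^c(L^B)_{SR}=G(L^B)$.
   Context: Blow-up: keep $0,1$ of $L=\mathbf{2}^n$ and replace every $x\in L\setminus\{0,1\}$ by a finite nonempty chain $C_x$, ordered by the chain order within $C_x$ and, for $a\in C_x,b\in C_y$, $x\neq y$, by $a\leq b$ iff $x\leq y$ in $L$. $Z^*(M)$ is the set of nonzero $a$ with $a\wedge b=0$ for some $b\neq0$. $G(M)$ (zero-divisor graph) has vertex set $Z^*(M)$, distinct $a,b$ adjacent iff $a\wedge b=0$; $G^c(M)$ is its complement on the same vertex set. In a connected graph, $u$ is maximally distant from $v$ if $d(v,w)\leq d(u,v)$ for all neighbours $w$ of $u$; mutually maximally distant means each is maximally distant from the other. $G_{SR}$ has as vertices those $u$ mutually maximally distant from some $v$, distinct vertices adjacent iff mutually maximally distant in $G$. *)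

From mathcomp Require Import all_boot.
Set Implicit Arguments. Unset Strict Implicit. Unset Printing Implicit Defensive.

(* k x is the length of the chain C_x replacing x (for x <> 0,1);
   0 = set0 and 1 = setT are kept (chains of length 1). *)
Definition csize (n : nat) (k : {set 'I_n} -> nat) (x : {set 'I_n}) : nat :=
  if (x == set0) || (x == setT) then 1 else k x.

(* element a = (x, i) : the i-th element of the chain C_x *)
Definition blowup (n : nat) (k : {set 'I_n} -> nat) : finType :=
  {x : {set 'I_n} & 'I_(csize k x)}.

Definition bu_le (n : nat) (k : {set 'I_n} -> nat) (a b : @blowup n k) : bool :=
  ((tag a == tag b) && (val (tagged a) <= val (tagged b))%N)
  || (tag a \proper tag b).

Definition bu_zero (n : nat) (k : {set 'I_n} -> nat) (a : @blowup n k) : bool := tag a == set0.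

Definition bu_meet0 (n : nat) (k : {set 'I_n} -> nat) (a b : @blowup n k) : bool :=
  [forall c, bu_le c a ==> bu_le c b ==> bu_zero c].

Definition bu_Zstar (n : nat) (k : {set 'I_n} -> nat) (a : @blowup n k) : bool :=
  ~~ bu_zero a && [exists b, ~~ bu_zero b && bu_meet0 a b].

Section Graphs.
Variables (T : finType) (V : pred T) (e : rel T).

Fixpoint walkb (m : nat) (u v : T) : bool :=
  if m is m'.+1 then [exists w, [&& V w, e u w & walkb m' w v]] else u == v.

(* graph distance: least m with a walk of length m (= #|T| if none) *)
Definition dist (u v : T) : nat := find (fun m => walkb m u v) (iota 0 #|T|).

Definition maxdist (u v : T) : Prop :=
  forall w, V w -> e u w -> (dist v w <= dist u v)%N.

Definition mmd (u v : T) : Prop := V u /\ V v /\ maxdist u v /\ maxdist v u.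

Definition SR_vertex (u : T) : Prop := exists v, mmd u v.
Definition SR_edge (u v : T) : Prop := u <> v /\ mmd u v.
End Graphs.

Definition G_edge (n : nat) (k : {set 'I_n} -> nat) (a b : @blowup n k) : bool := (a != b) && bu_meet0 a b.
Definition Gc_edge (n : nat) (k : {set 'I_n} -> nat) (a b : @blowup n k) : bool := (a != b) && ~~ bu_meet0 a b.

From mathcomp Require Import all_boot.
Set Implicit Arguments. Unset Strict Implicit. Unset Printing Implicit Defensive.

(* When every chain has one element the blow-up is 2^n itself, i.e. the
   subsets of {0, ..., n-1}: Z^* consists of the nonempty proper subsets and
   G^c joins distinct intersecting ones.  For n >= 3 the graph G^c has
   diameter at most 2, since two disjoint sets a, b both meet a pair {i, j}
   with i in a and j in b, which is proper; and disjoint sets are at distance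
   exactly 2, so they are mutually maximally distant.  Conversely, if a meets
   b and a is not contained in b, then a :\: b is a neighbour of a at
   distance 2 from b, while d(a, b) <= 1; and no vertex is maximally distant
   from itself.  Hence the mutually maximally distant pairs are exactly the
   disjoint pairs, which are the edges of G. *)

Section GraphDistance.
Variables (T : finType) (V : pred T) (e : rel T).

Lemma walkb1 u v : walkb V e 1 u v = V v && e u v.
Proof.
apply/existsP/andP => [[w /and3P[Vw euw /eqP <-]] | [Vv euv]]; first by [].
by exists v; rewrite Vv euv eqxx.
Qed.

Lemma dist_leq_walkb m u v : walkb V e m u v -> dist V e u v <= m.
Proof.
rewrite /dist => walk_m; case: (ltnP m #|T|) => [m_lt | m_ge].
  rewrite leqNgt; apply/negP => /(before_find 0).
  by rewrite nth_iota // add0n walk_m.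
by apply: leq_trans (find_size _ _) _; rewrite size_iota.
Qed.

Lemma dist_refl u : dist V e u u = 0.
Proof. by apply/eqP; rewrite -leqn0; apply: (@dist_leq_walkb 0) => /=. Qed.

Lemma dist_leq1 u v : V v -> e u v -> dist V e u v <= 1.
Proof. by move=> Vv euv; apply: dist_leq_walkb; rewrite walkb1 Vv euv. Qed.

Lemma dist_leq2 u w v : V w -> e u w -> V v -> e w v -> dist V e u v <= 2.
Proof.
move=> Vw euw Vv ewv; apply: dist_leq_walkb; apply/existsP; exists w.
by rewrite Vw euw -/(walkb V e 1 w v) walkb1 Vv ewv.
Qed.

Lemma walkb_dist u v : dist V e u v < #|T| -> walkb V e (dist V e u v) u v.
Proof.
rewrite /dist => lt_dist.
have has_walk : has (fun m => walkb V e m u v) (iota 0 #|T|).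
  by rewrite has_find size_iota.
by have := nth_find 0 has_walk; rewrite nth_iota // add0n.
Qed.

Lemma dist_gt0 u v : u != v -> 0 < dist V e u v.
Proof.
move=> neq_uv; rewrite lt0n; apply/eqP => dist0.
have /walkb_dist : dist V e u v < #|T|.
  by rewrite dist0; apply/card_gt0P; exists u.
by rewrite dist0 /= (negbTE neq_uv).
Qed.

Lemma dist_gt1 u v : u != v -> ~~ e u v -> 1 < dist V e u v.
Proof.
move=> neq_uv not_euv; rewrite ltnNge; apply/negP => dist_le1.
have /walkb_dist : dist V e u v < #|T|.
  by apply: leq_ltn_trans dist_le1 _; apply/card_gt1P; exists u, v.
move: dist_le1; case: (dist V e u v) => [|[|//]] _.
  by rewrite /= (negbTE neq_uv).
by rewrite walkb1 (negbTE not_euv) andbF.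
Qed.

Lemma maxdist_of_dist_gt1 u v :
  (forall w, V w -> dist V e v w <= 2) -> 1 < dist V e u v -> maxdist V e u v.
Proof. by move=> ecc_v dist_uv w Vw _; apply: leq_trans (ecc_v w Vw) dist_uv. Qed.

Lemma maxdist_self_neighbour u w :
  V w -> e u w -> w != u -> ~ maxdist V e u u.
Proof.
move=> Vw euw neq_wu /(_ w Vw euw).
by rewrite dist_refl leqNgt dist_gt0 // eq_sym.
Qed.

End GraphDistance.

Section FiniteSets.
Variable T : finType.
Implicit Types (A C : {set T}) (x i j : T).

Lemma set_neq_mem x A C : x \in A -> x \notin C -> A != C.
Proof. by move=> xA; apply: contraNneq => <-. Qed.

Lemma set_neq0_mem x A : x \in A -> A != set0.
Proof. by move=> xA; rewrite (set_neq_mem xA) // in_set0. Qed.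

Lemma setC_eq0 A : (~: A == set0) = (A == setT).
Proof. by rewrite -setCT (inj_eq (@setC_inj _)). Qed.

Lemma setC_eqT A : (~: A == setT) = (A == set0).
Proof. by rewrite -setC0 (inj_eq (@setC_inj _)). Qed.

Lemma notin_setI0 x A C : A :&: C = set0 -> x \in A -> x \notin C.
Proof.
move=> AC0 xA; apply/negP => xC.
have : x \in A :&: C by rewrite inE xA xC.
by rewrite AC0 inE.
Qed.

Lemma set2_neqT i j : 2 < #|T| -> [set i; j] != setT.
Proof.
move=> card_T; apply: contraTneq card_T => ij_T.
by rewrite -cardsT -ij_T cards2; case: (i != j).
Qed.

End FiniteSets.

Section TrivialBlowup.
Variables (n : nat) (k : {set 'I_n} -> nat).
Hypothesis k1 : forall x : {set 'I_n}, x != set0 -> x != setT -> k x = 1.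
Local Notation B := (@blowup n k).

Lemma csize1 x : csize k x = 1.
Proof. by rewrite /csize; case: ifP => // /norP[]; apply: k1. Qed.

Definition bu_of_set (x : {set 'I_n}) : B :=
  Tagged (fun x => 'I_(csize k x)) (cast_ord (esym (csize1 x)) ord0).

Lemma tag_bu_of_set x : tag (bu_of_set x) = x.
Proof. by []. Qed.

Lemma tagged_bu0 (a : B) : val (tagged a) = 0.
Proof.
case: a => x i /=; have := leq_trans (ltn_ord i) (eq_leq (csize1 x)).
by rewrite ltnS leqn0 => /eqP.
Qed.

Lemma tag_bu_inj (a b : B) : tag a = tag b -> a = b.
Proof.
case: a b => x i [y j] /= eq_xy; subst y; congr existT; apply: val_inj.
have /= -> := tagged_bu0 (existT _ x i : B).
by have /= -> := tagged_bu0 (existT _ x j : B).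
Qed.

Lemma bu_eqE (a b : B) : (a == b) = (tag a == tag b).
Proof. by apply/eqP/eqP => [->|/tag_bu_inj]. Qed.

Lemma bu_leE (a b : B) : bu_le a b = (tag a \subset tag b).
Proof.
rewrite /bu_le !tagged_bu0 leqnn andbT properEneq.
by case: eqVneq => [->|]; rewrite ?subxx.
Qed.

Lemma bu_meet0E (a b : B) : bu_meet0 a b = (tag a :&: tag b == set0).
Proof.
apply/forallP/eqP => [meet0 | disj_ab c].
  apply/setP => i; rewrite !inE; apply/negP => /andP[ia ib].
  have := meet0 (bu_of_set [set i]).
  rewrite !bu_leE /bu_zero tag_bu_of_set !sub1set ia ib /=.
  by apply/negP; apply: set_neq0_mem (set11 i).
apply/implyP => ca; apply/implyP => cb.
by rewrite /bu_zero -subset0 -disj_ab subsetI -!bu_leE ca.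
Qed.

Lemma bu_ZstarE (a : B) : bu_Zstar a = (tag a != set0) && (tag a != setT).
Proof.
rewrite /bu_Zstar /bu_zero; case: (eqVneq (tag a) set0) => //= a_neq0.
apply/existsP/idP => [[b /andP[b_neq0]] | a_neqT].
  by rewrite bu_meet0E; apply: contraTneq => ->; rewrite setTI.
exists (bu_of_set (~: tag a)).
by rewrite bu_meet0E tag_bu_of_set setICr eqxx setC_eq0 a_neqT.
Qed.

Lemma Gc_edgeE (a b : B) :
  Gc_edge a b = (tag a != tag b) && (tag a :&: tag b != set0).
Proof. by rewrite /Gc_edge bu_meet0E bu_eqE. Qed.

Local Notation V := (@bu_Zstar n k).
Local Notation e := (@Gc_edge n k).

Lemma bu_Zstar_of_set x : x != set0 -> x != setT -> V (bu_of_set x).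
Proof. by move=> x_neq0 x_neqT; rewrite bu_ZstarE x_neq0 x_neqT. Qed.

Lemma Gc_edge_sym : symmetric e.
Proof. by move=> a b; rewrite !Gc_edgeE eq_sym setIC. Qed.

Lemma dist_Zstar_disjoint (a b : B) :
  V a -> tag a :&: tag b = set0 -> 1 < dist V e a b.
Proof.
rewrite bu_ZstarE => /andP[/set0Pn[i ia] _] disj_ab.
by rewrite dist_gt1 // ?Gc_edgeE ?disj_ab ?eqxx ?andbF // bu_eqE
  (set_neq_mem ia (notin_setI0 disj_ab ia)).
Qed.

Lemma Gc_edge_of_set (a : B) (x : {set 'I_n}) i :
  i \in x -> i \in tag a -> x != tag a -> e a (bu_of_set x).
Proof.
move=> ix ia neq_xa; rewrite Gc_edgeE tag_bu_of_set eq_sym neq_xa.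
by rewrite (@set_neq0_mem _ i) // inE ia.
Qed.

Hypothesis n_gt2 : 2 < n.

Lemma Zstar_pair i j : V (bu_of_set [set i; j]).
Proof.
by rewrite bu_Zstar_of_set ?set2_neqT ?card_ord // (@set_neq0_mem _ i) // set21.
Qed.

Lemma dist_Zstar_le2 (a b : B) : V a -> V b -> dist V e a b <= 2.
Proof.
move=> Va Vb; case: (eqVneq a b) => [<- | neq_ab].
  by rewrite dist_refl.
case: (eqVneq (tag a :&: tag b) set0) => [disj_ab | meet_ab]; last first.
  by apply: leq_trans (dist_leq1 Vb _) _; rewrite // Gc_edgeE -bu_eqE neq_ab.
have disj_ba : tag b :&: tag a = set0 by rewrite setIC.
move: (Va) (Vb); rewrite !bu_ZstarE.
move=> /andP[/set0Pn[i ia] _] /andP[/set0Pn[j jb] _].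
have ja := notin_setI0 disj_ba jb; have ib := notin_setI0 disj_ab ia.
have iij : i \in [set i; j] by rewrite !inE eqxx.
have jij : j \in [set i; j] by rewrite !inE eqxx orbT.
apply: (dist_leq2 (Zstar_pair i j) _ Vb).
  exact: Gc_edge_of_set iij ia (set_neq_mem jij ja).
by rewrite Gc_edge_sym (Gc_edge_of_set jij jb (set_neq_mem iij ib)).
Qed.

Lemma not_maxdist_Zstar_meet (a b : B) :
  V a -> V b -> tag a :&: tag b != set0 -> ~~ (tag a \subset tag b) ->
  ~ maxdist V e a b.
Proof.
move=> Va Vb /set0Pn[i]; rewrite inE => /andP[ia ib].
rewrite -setD_eq0 => /set0Pn[j ja_b]; have /setDP[ja jb] := ja_b.
have iD : i \notin tag a :\: tag b by rewrite inE ib.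
have Vw : V (bu_of_set (tag a :\: tag b)).
  rewrite bu_Zstar_of_set ?(set_neq0_mem ja_b) //.
  by rewrite eq_sym (set_neq_mem (in_setT i)).
have aw : e a (bu_of_set (tag a :\: tag b)).
  by apply: Gc_edge_of_set ja_b ja _; rewrite eq_sym (set_neq_mem ia iD).
have ab : e a b.
  by rewrite Gc_edgeE (set_neq_mem ja jb) (@set_neq0_mem _ i) // inE ia.
move=> /(_ _ Vw aw) /leq_trans /(_ (dist_leq1 Vb ab)).
by rewrite leqNgt dist_Zstar_disjoint // tag_bu_of_set setDE setICA setICr setI0.
Qed.

Lemma not_maxdist_Zstar_self (a : B) : V a -> ~ maxdist V e a a.
Proof.
rewrite bu_ZstarE => /andP[/set0Pn[i ia] a_neqT].
have /set0Pn[j] : ~: tag a != set0 by rewrite setC_eq0.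
rewrite inE => ja.
have iij : i \in [set i; j] by rewrite !inE eqxx.
have jij : j \in [set i; j] by rewrite !inE eqxx orbT.
have neq_ija := set_neq_mem jij ja.
apply: (maxdist_self_neighbour (Zstar_pair i j) (Gc_edge_of_set iij ia neq_ija)).
by rewrite bu_eqE tag_bu_of_set.
Qed.

Lemma mmd_Zstar_disjoint (a b : B) :
  mmd V e a b <-> [/\ V a, V b & tag a :&: tag b == set0].
Proof.
split => [[Va [Vb [max_ab max_ba]]] | [Va Vb /eqP disj_ab]].
  split => //; apply/negPn/negP => meet_ab.
  have [eq_ab | neq_ab] := eqVneq a b.
    by move: max_ab; rewrite eq_ab; apply: not_maxdist_Zstar_self.
  have [sub_ab | nsub_ab] := boolP (tag a \subset tag b); last first.
    exact: not_maxdist_Zstar_meet Va Vb meet_ab nsub_ab max_ab.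
  apply: (not_maxdist_Zstar_meet Vb Va _ _ max_ba); first by rewrite setIC.
  by apply: contra neq_ab => sub_ba; rewrite bu_eqE eqEsubset sub_ab sub_ba.
have disj_ba : tag b :&: tag a = set0 by rewrite setIC.
by do !split => //; apply: maxdist_of_dist_gt1;
  by [move=> w; apply: dist_Zstar_le2 | apply: dist_Zstar_disjoint].
Qed.

Lemma SR_vertex_Gc (u : B) : SR_vertex V e u <-> V u.
Proof.
split => [[v []] // | Vu].
exists (bu_of_set (~: tag u)); apply/mmd_Zstar_disjoint.
split; rewrite // ?tag_bu_of_set ?setICr //.
by move: Vu; rewrite !bu_ZstarE tag_bu_of_set setC_eq0 setC_eqT andbC.
Qed.

Lemma SR_edge_Gc (u v : B) : SR_edge V e u v <-> [/\ V u, V v & G_edge u v].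
Proof.
rewrite /G_edge bu_meet0E; split.
  by case=> /eqP neq_uv /mmd_Zstar_disjoint[Vu Vv ->]; rewrite neq_uv.
by case=> Vu Vv /andP[/eqP neq_uv disj_uv]; split; last exact/mmd_Zstar_disjoint.
Qed.

End TrivialBlowup.

Theorem corollary3p17 (n : nat) (k : {set 'I_n} -> nat) :
  (3 <= n)%N ->
  (forall x : {set 'I_n}, x != set0 -> x != setT -> k x = 1%N) ->
  (forall u : @blowup n k,
      SR_vertex (@bu_Zstar n k) (@Gc_edge n k) u <-> bu_Zstar u) /\
  (forall u v : @blowup n k,
      SR_edge (@bu_Zstar n k) (@Gc_edge n k) u v <->
      [/\ bu_Zstar u, bu_Zstar v & G_edge u v]).
Proof. by move=> n_gt2 k1; split; [apply: SR_vertex_Gc | apply: SR_edge_Gc]. Qed.
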